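(* Let $n,t,t'$ be positive integers with $n\ge 2t(t+1)$ and $t'\log n\ge 4t\log t$, and let $m\ge 0$ be an integer. Then there exist a map $\mathcal{E}_b:\mathcal{S}_n\to\mathcal{S}_{n+t'+1}$ and a decoding map $\mathcal{D}$ such that for every $\sigma\in\mathcal{S}_n$ and every sequence $\pi_e$ obtained from $\pi=\mathcal{E}_b(\sigma)$ by a burst of stuck-at errors of length at most $t$ with threshold $m$ (as defined in the context), we have $\mathcal{D}(\pi_e)=\sigma$.
   Context: $\mathcal{S}_N$ denotes the set of permutations $\pi=(\pi(1),\ldots,\pi(N))$ of $[N]=\{1,\ldots,N\}$. Burst of stuck-at errors of length at most $t$ with threshold $m$: a sequence $\pi_e\in[N]^N$ is obtained from $\pi\in\mathcal{S}_N$ by such an error if there exist $j\in[N]$, $t_1\in[t]$ and positions $i_1,\ldots,i_{t_1}$ with $\pi(i_\ell)=j+\ell-1$ and $\pi(i_\ell)>m$ for all $\ell\in[t_1]$, such that $\pi_e(i_\ell)=j$ for all $\ell\in[t_1]$ and $\pi_e(i)=\pi(i)$ for $i\notin\{i_1,\ldots,i_{t_1}\}$. Logarithms are to a common base. *)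

From Stdlib Require Import Reals.
From mathcomp Require Import all_boot all_order all_fingroup.
Set Implicit Arguments.
Unset Strict Implicit.
Unset Printing Implicit Defensive.

(* Convention: S_N is modelled by 'S_N = {perm 'I_N}; positions and values
   are 0-based ordinals, and the 1-based value of x : 'I_N is (val x).+1.
   A sequence in [N]^N is modelled by {ffun 'I_N -> 'I_N} with the same
   value convention. *)
Definition v1 {N : nat} (x : 'I_N) : nat := (val x).+1.

Definition burst_stuck {N : nat} (t m : nat) (pi : 'S_N)
    (pie : {ffun 'I_N -> 'I_N}) : Prop :=
  exists (j t1 : nat) (pos : nat -> 'I_N),
    [/\ 1 <= j <= N, 1 <= t1 <= t,
        (forall l, 1 <= l <= t1 ->
           [/\ v1 (pi (pos l)) = j + l - 1, m < v1 (pi (pos l)) & v1 (pie (pos l)) = j]) &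
        (forall i : 'I_N, (forall l, 1 <= l <= t1 -> i <> pos l) -> pie i = pi i)].

(* t' * log n >= 4 * t * log t  (natural log; the base is irrelevant). *)
Definition log_cond (n t t' : nat) : Prop :=
  Rle (Rmult (INR 4) (Rmult (INR t) (ln (INR t)))) (Rmult (INR t') (ln (INR n))).

From Stdlib Require Import Reals Lra ClassicalEpsilon.
From mathcomp Require Import all_boot all_order all_fingroup.
From mathcomp Require Import zify.

Set Implicit Arguments.
Unset Strict Implicit.
Unset Printing Implicit Defensive.

(* A Gilbert-Varshamov argument in the symmetric group on N = n + t' + 1
   points.  If pi and pi' can both be turned into the same pi_e by a burst,
   then pi' agrees with pi outside the burst positions of pi, whose values
   form a window of at most t consecutive values; so pi^-1 pi' only permutes
   such a window, and these "confusable" quotients number at most N * t!.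
   A maximal code whose pairwise quotients avoid them covers the group by
   translates of the confusion set, hence has at least N! / (N * t!) >= n!
   codewords (using t! <= t^(4t) <= n^t').  Encode sigma as a codeword and
   decode by choosing any sigma consistent with pi_e. *)

Lemma fact_leq_expn k : k`! <= k ^ k.
Proof.
elim: k => [//|k IHk]; rewrite factS expnS leq_mul2l /=.
apply: leq_trans IHk _; case: k => [//|k].
by rewrite leq_exp2r.
Qed.

Lemma fact_mul_expn_leq n k : n`! * n ^ k <= (n + k)`!.
Proof.
elim: k => [|k IHk]; first by rewrite expn0 muln1 addn0.
rewrite addnS factS expnS mulnCA.
by apply: leq_mul IHk; lia.
Qed.

Lemma expn_Nat_pow m k : m ^ k = Nat.pow m k.
Proof. by elim: k => [//|k IHk]; rewrite expnS IHk. Qed.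

Lemma log_cond_expn n t t' : 0 < n -> 0 < t -> log_cond n t t' ->
  t ^ (4 * t) <= n ^ t'.
Proof.
move=> n_gt0 t_gt0 hlog; rewrite leqNgt; apply/negP => /ltP.
rewrite !expn_Nat_pow => /lt_INR; rewrite !pow_INR.
have n_pos : Rlt 0 (INR n) by apply: lt_0_INR; apply/ltP.
have t_pos : Rlt 0 (INR t) by apply: lt_0_INR; apply/ltP.
move=> /(ln_increasing _ _ (pow_lt _ t' n_pos)); rewrite !ln_pow //.
rewrite mult_INR; move: hlog; rewrite /log_cond; lra.
Qed.

Lemma log_cond_fact n t t' : 0 < n -> 0 < t -> log_cond n t t' -> t`! <= n ^ t'.
Proof.
move=> n_gt0 t_gt0 hlog; apply: leq_trans (fact_leq_expn t) _.
apply: leq_trans _ (log_cond_expn n_gt0 t_gt0 hlog).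
by rewrite leq_pexp2l // leq_pmull.
Qed.

Lemma fact_mul_leq_fact_add1 n t t' : t`! <= n ^ t' ->
  n`! * ((n + t' + 1) * t`!) <= (n + t' + 1)`!.
Proof.
move=> fact_t_le; rewrite addn1 factS mulnCA leq_mul2l /=.
apply: leq_trans (fact_mul_expn_leq n t').
by rewrite leq_mul2l fact_t_le orbT.
Qed.

Lemma card_bigcup_leq (I T : finType) (P : pred I) (F : I -> {set T}) :
  #|\bigcup_(i | P i) F i| <= \sum_(i | P i) #|F i|.
Proof.
elim/big_ind2: _ => [|n1 U1 n2 U2 le_U1 le_U2|//]; first by rewrite cards0.
exact: leq_trans (leq_card_setU U1 U2).1 (leq_add le_U1 le_U2).
Qed.

Lemma card_mulg_leq (gT : finGroupType) (A B : {set gT}) :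
  #|(A * B)%g| <= #|A| * #|B|.
Proof. by rewrite -cardsX [(A * B)%g]curry_imset2X leq_imset_card. Qed.

Lemma injection_into_set (aT T : finType) (C : {set T}) : #|aT| <= #|C| ->
  exists f : aT -> T, injective f /\ forall x, f x \in C.
Proof.
move=> le_aT_C; exists (fun x => enum_val (widen_ord le_aT_C (enum_rank x))).
split=> [x y /enum_val_inj /(congr1 val) eq_rank | x]; last exact: enum_valP.
exact/enum_rank_inj/ord_inj.
Qed.

Lemma unique_decoder (A B : Type) (P : A -> B -> Prop) : inhabited A ->
  (forall x y e, P x e -> P y e -> x = y) ->
  exists D : B -> A, forall x e, P x e -> D e = x.
Proof.
move=> inhA P_uniq; exists (fun e => epsilon inhA (fun x => P x e)) => x e Pxe.
apply: (P_uniq _ _ e _ Pxe).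
exact: (epsilon_spec inhA (fun y => P y e) (ex_intro _ x Pxe)).
Qed.

Section Packing.
Variables (gT : finGroupType) (R : {set gT}).
Implicit Types C : {set gT}.

Definition separated C :=
  [forall c in C, forall d in C, ((c^-1 * d)%g \in R) ==> (c == d)].

Lemma separatedP C :
  reflect {in C &, forall c d, (c^-1 * d)%g \in R -> c = d} (separated C).
Proof.
apply: (iffP forall_inP) => [sepC c d cC dC cdR | sepC c cC].
  by move/forall_inP: (sepC c cC) => /(_ d dC)/implyP/(_ cdR)/eqP.
by apply/forall_inP => d dC; apply/implyP => cdR; apply/eqP/sepC.
Qed.

Lemma separated0 : separated set0.
Proof. by apply/separatedP => c d; rewrite inE. Qed.

Hypotheses (R1 : 1%g \in R) (RV : {in R, forall r, (r^-1)%g \in R}).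

Lemma separated_setU1 C g :
  separated C -> g \notin (C * R)%g -> separated (g |: C).
Proof.
move=> /separatedP sepC gCR; apply/separatedP.
have far_g c : c \in C -> (c^-1 * g)%g \notin R.
  by move=> cC; apply: contra gCR => cgR; rewrite -(mulKVg c g) mem_mulg.
move=> c d /setU1P[-> | cC] /setU1P[-> | dC] //.
- by move=> /RV; rewrite invMg invgK (negbTE (far_g d dC)).
- by rewrite (negbTE (far_g c cC)).
- exact: sepC.
Qed.

Lemma maximal_separated_cover : exists2 C, separated C & (C * R)%g = setT.
Proof.
case: (arg_maxnP (fun C => #|C|) separated0) => C sepC maxC.
exists C => //; apply/setP => g; rewrite inE; apply: contraT => gCR.
have gC : g \notin C by apply: contra gCR => gC; rewrite -(mulg1 g) mem_mulg.
by have := maxC _ (separated_setU1 sepC gCR); rewrite cardsU1 gC /geq /= add1n ltnn.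
Qed.

Lemma separated_card_cover : exists2 C, separated C & #|gT| <= #|C| * #|R|.
Proof.
have [C sepC CR] := maximal_separated_cover.
by exists C => //; rewrite -cardsT -CR card_mulg_leq.
Qed.

End Packing.

Lemma v1_inj N : injective (@v1 N).
Proof. by move=> x y [] /val_inj. Qed.

Section BurstConfusion.
Variables (N t : nat).

Definition window (a : nat) : {set 'I_N} := [set x : 'I_N | val x \in iota a t].

Lemma card_window a : #|window a| <= t.
Proof.
have -> : #|window a| = #|(pmap insub (iota a t) : seq 'I_N)|.
  by apply: eq_card => x; rewrite inE mem_pmap_sub.
apply: leq_trans (card_size _) _.
by rewrite size_pmap_sub -[leqRHS](size_iota a) count_size.
Qed.

Definition burst_confusion : {set 'S_N} :=
  \bigcup_(a < N) [set r | perm_on (window a) r].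

Lemma burst_confusion1 : 0 < N -> 1%g \in burst_confusion.
Proof.
by move=> N_gt0; apply/bigcupP; exists (Ordinal N_gt0); rewrite ?inE ?perm_on1.
Qed.

Lemma burst_confusionV r : r \in burst_confusion -> (r^-1)%g \in burst_confusion.
Proof.
move=> /bigcupP[a _]; rewrite inE => /perm_onV r_on.
by apply/bigcupP; exists a; rewrite ?inE.
Qed.

Lemma card_burst_confusion : #|burst_confusion| <= N * t`!.
Proof.
apply: leq_trans (card_bigcup_leq _ _) _.
rewrite -[N in N * _]card_ord -sum_nat_const; apply: leq_sum => a _.
have -> : #|[set r | perm_on (window a) r]| = #|perm_on (window a)|.
  by apply: eq_card => r; rewrite inE.
by rewrite card_perm leq_fact ?card_window.
Qed.

Variable m : nat.

Lemma burst_stuck_agree (pi pi' : 'S_N) (pie : {ffun 'I_N -> 'I_N}) j t1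
    (pos : nat -> 'I_N) :
  0 < t1 ->
  (forall l, 1 <= l <= t1 ->
     [/\ v1 (pi (pos l)) = j + l - 1, m < v1 (pi (pos l)) & v1 (pie (pos l)) = j]) ->
  (forall i, (forall l, 1 <= l <= t1 -> i <> pos l) -> pie i = pi i) ->
  burst_stuck t m pi' pie ->
  forall i, (forall l, 1 <= l <= t1 -> i <> pos l) -> pi' i = pi i.
Proof.
move=> t1_gt0 hpos hout [j' [t1' [pos' [_ t1'_range hpos' hout']]]] i i_out.
have pie_i : pie i = pi i := hout i i_out.
case: (classic (exists2 l, 1 <= l <= t1' & i = pos' l)) => [[l' l'_range i_def] | i_out'];
  last by rewrite -pie_i; symmetry; apply: hout' => l l_range i_def;
          apply: i_out'; exists l.
have [_ _ pie_i_j'] := hpos' l' l'_range; rewrite -i_def pie_i in pie_i_j'.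
(* pi' sends pos' 1 to j' = v1 (pi i) and the burst leaves it there;
   comparing with pi at pos' 1 forces i = pos' 1. *)
have [pi'_p1 _ pie_p1] := hpos' 1 ltac:(lia).
case: (classic (exists2 l, 1 <= l <= t1 & pos' 1 = pos l))
  => [[l l_range p1_def] | p1_out].
- have [_ _ pie_pl] := hpos l l_range; rewrite -p1_def pie_p1 in pie_pl.
  have [pi_pos1 _ _] := hpos 1 ltac:(lia).
  have /perm_inj i_pos1 : pi i = pi (pos 1) by apply: v1_inj; rewrite pi_pos1; lia.
  by case: (i_out 1 ltac:(lia) i_pos1).
- have pie_p1_pi : pie (pos' 1) = pi (pos' 1).
    by apply: hout => l l_range p1_def; apply: p1_out; exists l.
  have /perm_inj p1_i : pi (pos' 1) = pi i.
    by apply: v1_inj; rewrite -pie_p1_pi pie_p1 pie_i_j'.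
  by apply: v1_inj; rewrite -p1_i pi'_p1 -pie_i_j' p1_i; lia.
Qed.

Lemma burst_confusion_mul (pi pi' : 'S_N) pie :
  burst_stuck t m pi pie -> burst_stuck t m pi' pie ->
  (pi^-1 * pi')%g \in burst_confusion.
Proof.
move=> [j [t1 [pos [j_range t1_range hpos hout]]]] burst'.
have j_lt : j.-1 < N by lia.
apply/bigcupP; exists (Ordinal j_lt) => //; rewrite inE.
apply/subsetP => x; rewrite inE permM => moved.
case: (classic (exists2 l, 1 <= l <= t1 & (pi^-1)%g x = pos l))
  => [[l l_range x_def] | x_out].
  have [pi_pl _ _] := hpos l l_range; rewrite -x_def permKV /v1 /= in pi_pl.
  by rewrite inE mem_iota /=; lia.
have t1_gt0 : 0 < t1 by case/andP: t1_range.
have x_fixed : pi' ((pi^-1)%g x) = x.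
  rewrite -{2}(permKV pi x); apply: (burst_stuck_agree t1_gt0 hpos hout burst').
  by move=> l l_range x_def; apply: x_out; exists l.
by rewrite x_fixed eqxx in moved.
Qed.

End BurstConfusion.

Theorem theorem2 (n t t' m : nat) :
  0 < n -> 0 < t -> 0 < t' -> 2 * t * (t + 1) <= n -> log_cond n t t' ->
  exists (E : 'S_n -> 'S_(n + t' + 1))
         (D : {ffun 'I_(n + t' + 1) -> 'I_(n + t' + 1)} -> 'S_n),
    forall (sigma : 'S_n) (pie : {ffun 'I_(n + t' + 1) -> 'I_(n + t' + 1)}),
      burst_stuck t m (E sigma) pie -> D pie = sigma.
Proof.
move=> n_gt0 t_gt0 _ _ hlog.
have N_gt0 : 0 < n + t' + 1 by rewrite addn1.
have [C /separatedP sepC cardC] :=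
  separated_card_cover (burst_confusion1 t N_gt0) (@burst_confusionV _ t).
have card_Sn_C : #|'S_n| <= #|C|.
  have R_gt0 : 0 < #|burst_confusion (n + t' + 1) t|.
    by apply/card_gt0P; exists 1%g; apply: burst_confusion1.
  rewrite card_Sn -(leq_pmul2r R_gt0); apply: (leq_trans _ cardC); rewrite card_Sn.
  apply: leq_trans (fact_mul_leq_fact_add1 (log_cond_fact n_gt0 t_gt0 hlog)).
  by rewrite leq_mul2l card_burst_confusion orbT.
have [E [E_inj E_C]] := injection_into_set card_Sn_C.
exists E; apply: unique_decoder; first exact: (inhabits 1%g).
move=> s s' pie burst_s burst_s'; apply: E_inj; apply: sepC (E_C s) (E_C s') _.
exact: burst_confusion_mul burst_s burst_s'.
Qed.
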